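(* For integers $n\ge2$ and $r\ge2$, the windmill graph $W(n,r)$ admits a weak IASI and its sparing number is $\varphi(W(n,r))=\frac{r}{2}(n-1)(n-2)$.
   Context: The windmill graph $W(n,r)$ ($n\ge2$, $r\ge2$) is obtained by taking $r$ copies of the complete graph $K_n$ and identifying one vertex from each copy into a single shared vertex. Let $\mathbb{N}_0$ be the set of non-negative integers; for $A,B\subseteq\mathbb{N}_0$, $A+B=\{a+b:a\in A,b\in B\}$. An integer additive set-indexer (IASI) of a graph $G$ is an injective map $f:V(G)\to\mathcal{P}(\mathbb{N}_0)$ such that $f^+:E(G)\to\mathcal{P}(\mathbb{N}_0)$, $f^+(uv)=f(u)+f(v)$, is injective. A weak IASI is an IASI with $|f^+(uv)|=\max(|f(u)|,|f(v)|)$ for every edge $uv$. An edge $e$ is mono-indexed if $|f^+(e)|=1$. The sparing number $\varphi(G)$ is the minimum number of mono-indexed edges over all weak IASIs of $G$. *)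

From HB Require Import structures.
From mathcomp Require Import all_boot all_order.
From mathcomp Require Import finmap.
Set Implicit Arguments. Unset Strict Implicit. Unset Printing Implicit Defensive.
Local Open Scope fset_scope.

Definition sumset (A B : {fset nat}) : {fset nat} :=
  [fset (a + b)%N | a in A, b in B].

(* Windmill graph W(n,r): vertices are the shared centre [None] and, for each
   copy i < r, the n-1 non-central vertices [Some (i, j)], j < n-1. *)
Definition wvert (n r : nat) : finType := option ('I_r * 'I_n.-1).

Definition wadj (n r : nat) : rel (wvert n r) := fun u v =>
  match u, v with
  | None, None => false
  | None, Some _ => true
  | Some _, None => true
  | Some (i, j), Some (i', j') => (i == i') && (j != j')
  end.

Section Iasi.
Variables (V : finType) (adj : rel V).

Definition edges : {set {set V}} := [set [set p.1; p.2] | p : V * V & adj p.1 p.2].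

Definition is_iasi (f : V -> {fset nat}) : Prop :=
  injective f /\
  (forall u v u' v', adj u v -> adj u' v' ->
     sumset (f u) (f v) = sumset (f u') (f v') -> [set u; v] = [set u'; v']).

Definition is_weak_iasi (f : V -> {fset nat}) : Prop :=
  is_iasi f /\
  (forall u v, adj u v -> #|` sumset (f u) (f v)| = maxn #|` f u| #|` f v|).

Definition mono_edges (f : V -> {fset nat}) : nat :=
  #|[set [set p.1; p.2] | p : V * V &
      adj p.1 p.2 && (#|` sumset (f p.1) (f p.2)| == 1%N)]|.

Definition is_sparing_number (k : nat) : Prop :=
  (exists2 f, is_weak_iasi f & mono_edges f = k) /\
  (forall f, is_weak_iasi f -> (k <= mono_edges f)%N).
End Iasi.

From mathcomp Require Import all_boot all_order finmap zify.
Set Implicit Arguments. Unset Strict Implicit. Unset Printing Implicit Defensive.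
Local Open Scope fset_scope.

(* If |f u| >= 2 and |f v| >= 2 then |f u + f v| exceeds both, so in a weak
   IASI every edge has an endpoint labelled by a singleton; an edge is then
   mono-indexed exactly when both its endpoints carry singletons.  In each
   blade K_n of W(n,r) at most one vertex carries a larger set, so at least
   n-1 of its vertices are singletons and at least C(n-1,2) of its edges are
   mono-indexed.  Conversely, labelling the centre by {0,1} and the other
   vertices by distinct powers of two is a weak IASI whose mono-indexed edges
   are exactly the edges avoiding the centre. *)

Lemma fset_nat_max (A : {fset nat}) : A != fset0 ->
  exists2 m, m \in A & forall a, a \in A -> (a <= m)%N.
Proof.
case/fset0Pn => a0 a0A.
case: (@arg_maxnP A (FSetSub a0A) xpredT val isT) => m _ m_max.
by exists (val m) => [|a aA]; [exact: valP | exact: (m_max (FSetSub aA))].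
Qed.

Lemma sumsetC (A B : {fset nat}) : sumset A B = sumset B A.
Proof.
by apply/fsetP => x; apply/imfset2P/imfset2P => -[a aA [b bB ->]];
  exists b => //; exists a => //; rewrite addnC.
Qed.

Lemma sumset_eq0 (A B : {fset nat}) :
  (sumset A B == fset0) = (A == fset0) || (B == fset0).
Proof.
apply/idP/idP; last first.
  by case/orP => /eqP->; apply/eqP/fsetP => x; rewrite inE;
     apply/imfset2P => -[a aA [b bB _]]; rewrite inE in aA bB.
apply: contraLR; rewrite negb_or => /andP [/fset0Pn [a aA] /fset0Pn [b bB]].
by apply/fset0Pn; exists (a + b)%N; apply/imfset2P; exists a => //; exists b.
Qed.

Lemma sumset1 (x y : nat) : sumset [fset x] [fset y] = [fset (x + y)%N].
Proof.
apply/fsetP => z; rewrite inE; apply/imfset2P/eqP.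
  by move=> [a /fset1P -> [b /fset1P -> ->]].
by move=> ->; exists x; rewrite ?inE //; exists y; rewrite ?inE.
Qed.

Lemma sumset01 (y : nat) : sumset [fset 0%N; 1%N] [fset y] = [fset y; y.+1].
Proof.
apply/fsetP => z; apply/imfset2P/fset2P.
  by move=> [a /fset2P [->|->] [b /fset1P -> ->]]; [left|right].
by move=> [->|->]; [exists 0%N | exists 1%N]; rewrite ?inE //; exists y; rewrite ?inE.
Qed.

Lemma cardfs_pairS (y : nat) : #|` [fset y; y.+1]| = 2%N.
Proof. by rewrite cardfs2 neq_ltn ltnSn. Qed.

Lemma fset_pairS_inj : injective (fun y : nat => [fset y; y.+1]).
Proof.
move=> x y E.
have /fset2P xy : x \in [fset y; y.+1] by rewrite -E !inE eqxx.
have /fset2P yx : y \in [fset x; x.+1] by rewrite E !inE eqxx.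
lia.
Qed.

(* A + b has |A| elements and misses max A + max B whenever b < max B. *)
Lemma card_sumset_gt (A B : {fset nat}) : A != fset0 -> (2 <= #|` B|)%N ->
  (#|` A| < #|` sumset A B|)%N.
Proof.
move=> A0 B2.
have [m mA m_max] := fset_nat_max A0.
have [b2 b2B b2_max] : exists2 b2, b2 \in B & forall b, b \in B -> (b <= b2)%N.
  by apply: fset_nat_max; rewrite -cardfs_gt0; lia.
have [b1 /fsetD1P [b1b2 b1B]] : exists b1, b1 \in B `\ b2.
  by apply/fset0Pn; rewrite -cardfs_gt0 (cardfsD1 b2 B) b2B in B2 *; lia.
have b1_lt : (b1 < b2)%N by rewrite ltn_neqAle b1b2 b2_max.
pose S := [fset (a + b1)%N | a in A].
have cardS : #|` S| = #|` A| by rewrite card_imfset //= => x y /addIn.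
have top_notin : (m + b2)%N \notin S.
  by apply/imfsetP => -[a /= aA E]; have := m_max a aA; lia.
have sub : (m + b2)%N |` S `<=` sumset A B.
  apply/fsubsetP => x; rewrite !inE => /orP [/eqP ->|/imfsetP [a /= aA ->]].
    by apply/imfset2P; exists m => //; exists b2.
  by apply/imfset2P; exists a => //; exists b1.
by have := fsubset_leq_card sub; rewrite cardfsU1 top_notin cardS.
Qed.

Section WeakIasi.
Variables (V : finType) (adj : rel V) (f : V -> {fset nat}).
Hypotheses (adj_irr : irreflexive adj) (f_weak : is_weak_iasi adj f).

Lemma weak_iasi_neq0 (u v : V) : adj u v -> (f u != fset0) && (f v != fset0).
Proof.
move=> uv; rewrite -negb_or -sumset_eq0 -cardfs_eq0 (f_weak.2 u v uv).
apply/negP => /eqP card0.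
have fu : f u = fset0 by apply/eqP; rewrite -cardfs_eq0; lia.
have fv : f v = fset0 by apply/eqP; rewrite -cardfs_eq0; lia.
by move: uv; rewrite (f_weak.1.1 u v) ?adj_irr // fu fv.
Qed.

Lemma weak_iasi_small (u v : V) : adj u v ->
  (#|` f u| <= 1)%N || (#|` f v| <= 1)%N.
Proof.
move=> uv; case/andP: (weak_iasi_neq0 uv) => fu0 fv0.
have := card_sumset_gt (B := f v) fu0; have := card_sumset_gt (B := f u) fv0.
by rewrite sumsetC (f_weak.2 u v uv); lia.
Qed.

Lemma weak_iasi_mono (u v : V) : adj u v ->
  (#|` sumset (f u) (f v)| == 1%N) = (#|` f u| <= 1)%N && (#|` f v| <= 1)%N.
Proof.
move=> uv; case/andP: (weak_iasi_neq0 uv); rewrite -!cardfs_gt0.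
by rewrite (f_weak.2 u v uv); lia.
Qed.

End WeakIasi.

Definition mono_edge_set (V : finType) (adj : rel V) (f : V -> {fset nat}) :=
  [set [set p.1; p.2] | p : V * V &
      adj p.1 p.2 && (#|` sumset (f p.1) (f p.2)| == 1%N)].

Lemma wadj_irr (n r : nat) : irreflexive (@wadj n r).
Proof. by move=> [[i j]|] //=; rewrite !eqxx. Qed.

(* The edges of W(n,r) avoiding the centre are indexed by a blade and a pair
   of its n-1 outer vertices. *)
Definition blade_pairs (n r : nat) : {set 'I_r * {set 'I_n.-1}} :=
  [set x : 'I_r * {set 'I_n.-1} | #|x.2| == 2%N].

Lemma card_blade_pairs (n r : nat) : #|blade_pairs n r| = (r * 'C(n.-1, 2))%N.
Proof.
have -> : blade_pairs n r = setX [set: 'I_r] [set A : {set 'I_n.-1} | #|A| == 2%N].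
  by apply/setP => -[i A]; rewrite !inE.
by rewrite cardsX cardsT card_ord card_draws card_ord.
Qed.

Section WindmillLowerBound.
Variables (n r : nat) (f : wvert n r -> {fset nat}).
Hypothesis f_weak : is_weak_iasi (@wadj n r) f.

Local Notation small v := (#|` f v| <= 1)%N.

(* A blade has at most one large label, so swapping a large outer vertex for
   the centre yields n-1 distinct vertices with small labels. *)
Definition blade_vertex (i : 'I_r) (j : 'I_n.-1) : wvert n r :=
  if small (Some (i, j)) then Some (i, j) else None.

Definition blade_edge (x : 'I_r * {set 'I_n.-1}) : {set wvert n r} :=
  blade_vertex x.1 @: x.2.

Lemma blade_small (i : 'I_r) (a b : 'I_n.-1) : a != b ->
  small (Some (i, a)) || small (Some (i, b)).
Proof.
move=> ab; apply: (weak_iasi_small (@wadj_irr n r) f_weak).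
by rewrite /= eqxx.
Qed.

Lemma small_blade_vertex (i : 'I_r) (j : 'I_n.-1) : small (blade_vertex i j).
Proof.
rewrite /blade_vertex; case: ifPn => // big.
have := weak_iasi_small (@wadj_irr n r) f_weak (isT : wadj None (Some (i, j))).
by case/orP => // outer_small; rewrite outer_small in big.
Qed.

Lemma blade_vertex_inj (i : 'I_r) : injective (blade_vertex i).
Proof.
move=> a b; rewrite /blade_vertex.
case: ifPn => sa; case: ifPn => sb //; first by case.
move=> _; apply/eqP/negPn/negP => ab.
by have := blade_small i ab; rewrite (negbTE sa) (negbTE sb).
Qed.

Lemma blade_vertex_adj (i : 'I_r) (a b : 'I_n.-1) : a != b ->
  wadj (blade_vertex i a) (blade_vertex i b).
Proof.
move=> ab; have := blade_small i ab; rewrite /blade_vertex.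
by case: ifPn => sa; case: ifPn => sb //=; rewrite eqxx.
Qed.

Lemma blade_edge_pair (i : 'I_r) (a b : 'I_n.-1) :
  blade_edge (i, [set a; b]) = [set blade_vertex i a; blade_vertex i b].
Proof. by rewrite /blade_edge /= imsetU1 imset_set1. Qed.

Lemma blade_edge_mono (x : 'I_r * {set 'I_n.-1}) :
  x \in blade_pairs n r -> blade_edge x \in mono_edge_set (@wadj n r) f.
Proof.
case: x => i A; rewrite inE /= => /cards2P [a [b [ab ->]]].
rewrite blade_edge_pair; apply/imsetP; exists (blade_vertex i a, blade_vertex i b) => //.
have ab_adj := blade_vertex_adj i ab.
by rewrite inE /= ab_adj (weak_iasi_mono (@wadj_irr n r) f_weak ab_adj)
  !small_blade_vertex.
Qed.

Lemma blade_edge_inj : {in blade_pairs n r &, injective blade_edge}.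
Proof.
case=> i A [i' A']; rewrite !inE /= => /cards2P [a [b [ab ->]]] _ E.
have [c outer_c] : exists c, Some (i, c) \in blade_edge (i, [set a; b]).
  rewrite blade_edge_pair /blade_vertex.
  by case/orP: (blade_small i ab) => ->; [exists a | exists b]; rewrite !inE eqxx ?orbT.
move: outer_c; rewrite E => /imsetP [d _]; rewrite /blade_vertex.
case: ifP => // _ [ii' _]; subst i'; congr pair.
exact: (imset_inj (@blade_vertex_inj i)) E.
Qed.

Lemma windmill_mono_ge : (r * 'C(n.-1, 2) <= mono_edges (@wadj n r) f)%N.
Proof.
rewrite -card_blade_pairs -(card_in_imset blade_edge_inj).
by apply/subset_leq_card/subsetP => _ /imsetP [x xP ->]; apply: blade_edge_mono.
Qed.

End WindmillLowerBound.

Lemma trunc_log2_add (a b : nat) : (a < b)%N -> trunc_log 2 (2 ^ a + 2 ^ b) = b.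
Proof.
move=> ab; apply: trunc_log_eq => //.
have : (2 ^ a < 2 ^ b)%N by rewrite ltn_exp2l.
by rewrite expnS; lia.
Qed.

Lemma expn2_add_inj (a b c d : nat) : (a < b)%N -> (c < d)%N ->
  (2 ^ a + 2 ^ b = 2 ^ c + 2 ^ d)%N -> a = c /\ b = d.
Proof.
move=> ab cd E.
have bd : b = d by rewrite -(trunc_log2_add ab) -(trunc_log2_add cd) E.
by subst d; split => //; apply/(@expnI 2) => //; lia.
Qed.

Lemma expn2_add_pair (a b c d : nat) : a != b -> c != d ->
  (2 ^ a + 2 ^ b = 2 ^ c + 2 ^ d)%N -> (a = c /\ b = d) \/ (a = d /\ b = c).
Proof.
rewrite !neq_ltn => /orP [ab|ba] /orP [cd|dc] E.
- by left; apply: expn2_add_inj E.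
- by right; apply: expn2_add_inj ab dc (etrans E (addnC _ _)).
- by right; case: (expn2_add_inj ba cd (etrans (addnC _ _) E)).
- by left; case: (expn2_add_inj ba dc (etrans (addnC _ _) (etrans E (addnC _ _)))).
Qed.

Section WindmillLabelling.
Variables (n r : nat).
Local Notation V := (wvert n r).

Definition outer_code (v : V) : nat := 2 ^ enum_rank v.

Lemma outer_code_inj : injective outer_code.
Proof.
move=> u v /eqP; rewrite eqn_exp2l // => /eqP /val_inj.
exact: enum_rank_inj.
Qed.

Definition windmill_iasi (v : V) : {fset nat} :=
  if v is Some _ then [fset outer_code v] else [fset 0%N; 1%N].

Lemma windmill_iasi_inj : injective windmill_iasi.
Proof.
case=> [u|] [v|] //= => [/fsetP /(_ (outer_code (Some u)))|E|E].
- by rewrite !inE eqxx => /esym/eqP/outer_code_inj.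
- by have := congr1 (fun A => #|` A|) E; rewrite cardfs1 cardfs2.
- by have := congr1 (fun A => #|` A|) E; rewrite cardfs1 cardfs2.
Qed.

Lemma windmill_iasi_edge_inj (u v u' v' : V) : wadj u v -> wadj u' v' ->
  sumset (windmill_iasi u) (windmill_iasi v) =
  sumset (windmill_iasi u') (windmill_iasi v') -> [set u; v] = [set u'; v'].
Proof.
have card12 x y : #|` [fset x; x.+1]| <> #|` [fset y]| by rewrite cardfs_pairS cardfs1.
have rank_neq (x y : V) : wadj x y -> (enum_rank x : nat) != enum_rank y.
  by apply: contraPneq => /val_inj /enum_rank_inj ->; rewrite wadj_irr.
case: u v u' v' => [u|] [v|] [u'|] [v'|] // uv u'v' /=;
  rewrite ?sumset1 ?(sumsetC _ [fset 0%N; 1%N]) ?sumset01.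
- move=> /fsetP /(_ (outer_code (Some u) + outer_code (Some v))%N).
  rewrite !inE eqxx => /esym/eqP.
  case/(expn2_add_pair (rank_neq _ _ uv) (rank_neq _ _ u'v')).
    by case=> /val_inj/enum_rank_inj -> /val_inj/enum_rank_inj ->.
  by case=> /val_inj/enum_rank_inj -> /val_inj/enum_rank_inj ->; rewrite setUC.
- by move/(congr1 (fun A => #|` A|)) => /esym /card12.
- by move/(congr1 (fun A => #|` A|)) => /esym /card12.
- by move/(congr1 (fun A => #|` A|)) => /card12.
- by move/fset_pairS_inj/outer_code_inj ->.
- by move/fset_pairS_inj/outer_code_inj ->; rewrite setUC.
- by move/(congr1 (fun A => #|` A|)) => /card12.
- by move/fset_pairS_inj/outer_code_inj ->; rewrite setUC.
- by move/fset_pairS_inj/outer_code_inj ->.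
Qed.

Lemma windmill_iasi_weak : is_weak_iasi (@wadj n r) windmill_iasi.
Proof.
split; first by split; [exact: windmill_iasi_inj | exact: windmill_iasi_edge_inj].
case=> [u|] [v|] //= _.
- by rewrite sumset1 !cardfs1.
- by rewrite sumsetC sumset01 cardfs_pairS cardfs1 cardfs2.
- by rewrite sumset01 cardfs_pairS cardfs1 cardfs2.
Qed.

Lemma windmill_iasi_mono_le :
  (mono_edges (@wadj n r) windmill_iasi <= r * 'C(n.-1, 2))%N.
Proof.
have f_weak := windmill_iasi_weak.
rewrite -card_blade_pairs -(card_in_imset (blade_edge_inj f_weak)).
apply/subset_leq_card/subsetP => e /imsetP [[u v] /=].
rewrite inE /= => /andP [uv]; rewrite (weak_iasi_mono (@wadj_irr n r) f_weak uv).
case: u v uv => [[i j]|] [[i' j']|] //=; rewrite ?cardfs1 ?cardfs2 //.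
move=> /andP [/eqP <- jj'] _ ->.
apply/imsetP; exists (i, [set j; j']); first by rewrite inE /= cards2 jj'.
by rewrite blade_edge_pair /blade_vertex /= !cardfs1.
Qed.

End WindmillLabelling.

Lemma muln_bin2_div2 (r m : nat) : (r * 'C(m, 2))%N = (r * (m * m.-1)) %/ 2.
Proof. by have := bin_ffact m 2; rewrite ffactnS ffactn1 => <-; rewrite mulnA mulnK. Qed.

Theorem theorem2p15 (n r : nat) : (2 <= n)%N -> (2 <= r)%N ->
  (exists f : wvert n r -> {fset nat}, is_weak_iasi (@wadj n r) f) /\
  is_sparing_number (@wadj n r) ((r * ((n - 1) * (n - 2))) %/ 2).
Proof.
move=> _ _.
have f_weak := @windmill_iasi_weak n r.
have -> : (r * ((n - 1) * (n - 2))) %/ 2 = (r * 'C(n.-1, 2))%N.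
  by rewrite muln_bin2_div2 -!subn1 -subnDA.
split; first by exists (@windmill_iasi n r).
split; last by move=> f; exact: windmill_mono_ge.
exists (@windmill_iasi n r) => //.
by apply/eqP; rewrite eqn_leq windmill_iasi_mono_le windmill_mono_ge.
Qed.
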